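(* In the setting below, let $(\tilde\theta,\omega_1,\omega_2,\omega_3)$ be a type I natural SU(2)-structure on $\mathcal S$ with coefficients $b_0,b_1,b_2,c_0,c_1,c_2$, and let $\Phi_2$ be the endomorphism of $\ker\theta$ determined by $\omega_2(x,\Phi_2y)=g_{SU(2)}(x,y)$ for all $x,y\in\ker\theta$. Then $\Phi_2(V_0)\subset V_0$ if and only if $c_2=0$, and $\Phi_2(H_0)\subset H_0$ if and only if $c_0=0$. Consequently $\Phi_2$ preserves both $H_0$ and $V_0$ if and only if there exist $b_2\ne0$ and $\varepsilon\in\{1,-1\}$ with $\varepsilon b_2>0$ such that $\omega_2=b_2\alpha_2-\frac1{b_2}\alpha_0$ and $\omega_3=\varepsilon\alpha_1$.
   Context: Let $(M,g)$ be an oriented Riemannian 3-manifold, $s>0$, $\mathcal S=\{u\in TM:\|u\|=s\}$ the total space of the radius-$s$ tangent sphere bundle with the canonical (Sasaki-induced) metric. An adapted frame at $u\in\mathcal S$: take a positively oriented orthonormal frame $(f_0=u/s,f_1,f_2)$ of $T_{\pi(u)}M$ and set $e_0=f_0^h,e_1=f_1^h,e_2=f_2^h,e_3=f_1^v,e_4=f_2^v$ (horizontal and vertical lifts); dual coframe $e^0,\dots,e^4$, $e^{ij}=e^i\wedge e^j$. Globally defined: $\theta=s\,e^0$, $\alpha_0=e^{12}$, $\alpha_1=e^{14}-e^{23}$, $\alpha_2=e^{34}$, $d\theta=e^{31}+e^{42}$; $H_0=\mathrm{span}\{e_1,e_2\}$, $V_0=\mathrm{span}\{e_3,e_4\}$,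 $\ker\theta=H_0\oplus V_0$. An SU(2)-structure: $(\tilde\theta,\omega_1,\omega_2,\omega_3)$ with (C1) $\tilde\theta\wedge\omega_1\wedge\omega_1\neq0$, $\omega_i\wedge\omega_j=0$ ($i\ne j$), $\omega_1\wedge\omega_1=\omega_2\wedge\omega_2=\omega_3\wedge\omega_3=2v$, $v$ nowhere zero; (C2) $x\lrcorner\omega_1=y\lrcorner\omega_2\Rightarrow\omega_3(x,y)\ge0$. Metric on $\ker\tilde\theta$: $g_{SU(2)}$ defined by $x\lrcorner\omega_1\wedge y\lrcorner\omega_2\wedge\omega_3=g_{SU(2)}(x,y)\,v$. Type I natural SU(2)-structure: an SU(2)-structure with $\tilde\theta=-2\theta$, $\omega_1=d\theta$, $\omega_2=b_0\alpha_0+b_1\alpha_1+b_2\alpha_2$, $\omega_3=c_0\alpha_0+c_1\alpha_1+c_2\alpha_2$, real constants (equivalently $b_1^2-b_0b_2=c_1^2-c_0c_2=1$, $b_0c_2+b_2c_0-2b_1c_1=0$, $b_1c_0-b_0c_1>0$). *)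

(* Pointwise linear algebra on ker(theta) = span{e1,e2,e3,e4}
   at a point u of S, in an adapted frame.  Indices: e1,e2,e3,e4 |-> 0,1,2,3. *)
From HB Require Import structures.
From mathcomp Require Import all_boot all_order all_algebra.
Set Implicit Arguments. Unset Strict Implicit. Unset Printing Implicit Defensive.
Import Order.TTheory GRing.Theory Num.Theory.
Local Open Scope ring_scope.

Section Forms.
Variable R : realFieldType.

(* tangent vectors in ker theta: row vectors of coordinates w.r.t. (e1,e2,e3,e4) *)
Definition vec := 'rV[R]_4.
(* 1-forms on ker theta: row vectors of coefficients w.r.t. (e^1,..,e^4) *)
(* 2-forms on ker theta: skew matrices A, A i j = coefficient of e^{ij} for i<j,
   omega(x,y) = x A y^T *)
Definition form2 := 'M[R]_4.

Definition i0 : 'I_4 := @Ordinal 4 0 isT.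
Definition i1 : 'I_4 := @Ordinal 4 1 isT.
Definition i2 : 'I_4 := @Ordinal 4 2 isT.
Definition i3 : 'I_4 := @Ordinal 4 3 isT.

Definition eij (i j : 'I_4) : form2 := delta_mx i j - delta_mx j i.

Definition ev2 (w : form2) (x y : vec) : R := (x *m w *m y^T) 0 0.

Definition contr (x : vec) (w : form2) : 'rV[R]_4 := x *m w.

Definition wedge11 (a b : 'rV[R]_4) : form2 :=
  \matrix_(i, j) (a 0 i * b 0 j - a 0 j * b 0 i).

(* coefficient of e^{1234} in  A /\ B  for 2-forms A, B *)
Definition wedge22 (A B : form2) : R :=
  A i0 i1 * B i2 i3 - A i0 i2 * B i1 i3 + A i0 i3 * B i1 i2
  + A i1 i2 * B i0 i3 - A i1 i3 * B i0 i2 + A i2 i3 * B i0 i1.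

(* the globally defined forms, restricted to ker theta *)
Definition alpha0 : form2 := eij i0 i1.
Definition alpha1 : form2 := eij i0 i3 - eij i1 i2.
Definition alpha2 : form2 := eij i2 i3.
Definition dtheta : form2 := eij i2 i0 + eij i3 i1.

(* v (coefficient of e^{1234}) determined by omega1 /\ omega1 = 2 v *)
Definition vol (w1 : form2) : R := wedge22 w1 w1 / 2.

(* SU(2)-structure conditions (C1), (C2); theta~ = -2 theta = -2 s e^0 with
   s > 0 and the omega_i have no e^0 component, so theta~/\w1/\w1 <> 0 and
   "v nowhere zero" both amount to vol w1 <> 0. *)
Definition su2_structure (w1 w2 w3 : form2) : Prop :=
  [/\ vol w1 != 0,
      wedge22 w1 w2 = 0 /\ wedge22 w1 w3 = 0 /\ wedge22 w2 w3 = 0,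
      wedge22 w2 w2 = 2 * vol w1 /\ wedge22 w3 w3 = 2 * vol w1
    & forall x y : vec, contr x w1 = contr y w2 -> 0 <= ev2 w3 x y].

(* g_SU(2)(x,y): x_|w1 /\ y_|w2 /\ w3 = g(x,y) v *)
Definition gSU2 (w1 w2 w3 : form2) (x y : vec) : R :=
  wedge22 (wedge11 (contr x w1) (contr y w2)) w3 / vol w1.

Definition omega_of (a0 a1 a2 : R) : form2 :=
  a0 *: alpha0 + a1 *: alpha1 + a2 *: alpha2.

Definition type_I (b0 b1 b2 c0 c1 c2 : R) : Prop :=
  su2_structure dtheta (omega_of b0 b1 b2) (omega_of c0 c1 c2).

Definition inH0 (x : vec) : Prop := x 0 i2 = 0 /\ x 0 i3 = 0.
Definition inV0 (x : vec) : Prop := x 0 i0 = 0 /\ x 0 i1 = 0.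

(* endomorphism Phi of ker theta, given by the matrix P: Phi y = y *m P *)
Definition preserves (P : 'M[R]_4) (S : vec -> Prop) : Prop :=
  forall y, S y -> S (y *m P).

End Forms.

(* The defining identity of Phi_2 says omega_2 Phi_2^T = g, and g = g_SU(2) is read
   off in the adapted frame from the coefficients ([metric_mx]).  Since
   b1^2 - b0 b2 = 1, omega_2 is invertible, and the relation
   b0 c2 + b2 c0 = 2 b1 c1 identifies Phi_2 with the explicit matrix [Phi2_mx]:
   its H0 -> V0 block is c0 J and its V0 -> H0 block is -c2 J, J a plane rotation.
   If c0 = c2 = 0, the relations force c1 = +-1, b1 = 0 and b0 = -1/b2, and
   condition (C2) fixes the sign of c1 b2. *)

From HB Require Import structures.
From mathcomp Require Import all_boot all_order all_algebra ring lra.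
Import Order.TTheory GRing.Theory Num.Theory.
Local Open Scope ring_scope.

Section NaturalSU2.
Context {R : realFieldType}.
Implicit Types (A P : 'M[R]_4) (x y : 'rV[R]_4).

Lemma sum4 (f : 'I_4 -> R) : \sum_k f k = f i0 + f i1 + f i2 + f i3.
Proof.
rewrite !big_ord_recr big_ord0 /= add0r.
by congr (_ + _ + _ + _); apply/congr1/val_inj.
Qed.

Definition mx4 (rows : seq (seq R)) : 'M[R]_4 :=
  \matrix_(i, j) nth 0 (nth [::] rows i) j.

Lemma omega_ofE (a0 a1 a2 : R) : omega_of a0 a1 a2 =
  mx4 [:: [:: 0; a0; 0; a1]; [:: - a0; 0; - a1; 0];
          [:: 0; a1; 0; a2]; [:: - a1; 0; - a2; 0]].
Proof.
apply/matrixP => i j; rewrite !mxE.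
by case: i => [[|[|[|[|//]]]] ?]; case: j => [[|[|[|[|//]]]] ?] /=; ring.
Qed.

Lemma dthetaE : dtheta R =
  mx4 [:: [:: 0; 0; -1; 0]; [:: 0; 0; 0; -1]; [:: 1; 0; 0; 0]; [:: 0; 1; 0; 0]].
Proof.
apply/matrixP => i j; rewrite !mxE.
by case: i => [[|[|[|[|//]]]] ?]; case: j => [[|[|[|[|//]]]] ?] /=; ring.
Qed.

Lemma omega_of_inj (a0 a1 a2 a0' a1' a2' : R) :
  omega_of a0 a1 a2 = omega_of a0' a1' a2' -> (a0, a1, a2) = (a0', a1', a2').
Proof.
move=> eq_omega; have := congr1 (fun W : 'M_4 => (W i0 i1, W i0 i3, W i2 i3)) eq_omega.
by rewrite !omega_ofE !mxE.
Qed.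

(* omega_of a0 a1 a2 is the Kronecker product [[a0, a1], [a1, a2]] (x) J with
   J = [[0, 1], [-1, 0]]; the second factor is built from the adjugate. *)
Lemma omega_of_mul_adj (a0 a1 a2 : R) :
  omega_of a0 a1 a2 *m omega_of a2 (- a1) a0 = (a1 ^+ 2 - a0 * a2)%:M.
Proof.
apply/matrixP => i j; rewrite !omega_ofE !mxE sum4 !mxE.
by case: i => [[|[|[|[|//]]]] ?]; case: j => [[|[|[|[|//]]]] ?] /=; ring.
Qed.

Lemma omega_of_mulKmx {a0 a1 a2 : R} : a1 ^+ 2 - a0 * a2 = 1 ->
  cancel (@mulmx R 4 4 4 (omega_of a0 a1 a2)) (mulmx (omega_of a2 (- a1) a0)).
Proof.
move=> unimodular X; have := omega_of_mul_adj a2 (- a1) a0.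
by rewrite opprK sqrrN mulrC unimodular mulmxA => ->; rewrite mul1mx.
Qed.

Lemma vol_dtheta : vol (dtheta R) = -1.
Proof. by rewrite /vol /wedge22 dthetaE !mxE /=; field. Qed.

Definition metric_mx (b0 b1 b2 c0 c1 c2 : R) : 'M[R]_4 :=
  let p := b1 * c0 - b0 * c1 in let q := b2 * c0 - b1 * c1 in
  let r := b1 * c1 - b0 * c2 in let s := b2 * c1 - b1 * c2 in
  mx4 [:: [:: p; 0; q; 0]; [:: 0; p; 0; q]; [:: r; 0; s; 0]; [:: 0; r; 0; s]].

Lemma gSU2_delta (b0 b1 b2 c0 c1 c2 : R) i j :
  gSU2 (dtheta R) (omega_of b0 b1 b2) (omega_of c0 c1 c2)
       (delta_mx 0 i) (delta_mx 0 j)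
  = metric_mx b0 b1 b2 c0 c1 c2 i j.
Proof.
rewrite /gSU2 vol_dtheta invrN1 /contr -!rowE /wedge22 dthetaE !omega_ofE !mxE.
by case: i => [[|[|[|[|//]]]] ?]; case: j => [[|[|[|[|//]]]] ?] /=; ring.
Qed.

Lemma ev2_delta A i j : ev2 A (delta_mx 0 i) (delta_mx 0 j) = A i j.
Proof. by rewrite /ev2 -rowE trmx_delta -colE !mxE. Qed.

Lemma ev2_mulmxr A P x y : ev2 A x (y *m P) = ev2 (A *m P^T) x y.
Proof. by rewrite /ev2 trmx_mul !mulmxA. Qed.

Definition Phi2_mx (c0 c1 c2 : R) : 'M[R]_4 :=
  mx4 [:: [:: 0; - c1; 0; c0]; [:: c1; 0; - c0; 0];
          [:: 0; - c2; 0; c1]; [:: c2; 0; - c1; 0]].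

Lemma omega_of_mul_Phi2 (b0 b1 b2 c0 c1 c2 : R) :
  b0 * c2 + b2 * c0 = 2 * b1 * c1 ->
  omega_of b0 b1 b2 *m (Phi2_mx c0 c1 c2)^T = metric_mx b0 b1 b2 c0 c1 c2.
Proof.
move=> orth; apply/matrixP => i j; rewrite omega_ofE !mxE sum4 !mxE.
by case: i => [[|[|[|[|//]]]] ?]; case: j => [[|[|[|[|//]]]] ?] /=; lra.
Qed.

Lemma Phi2_mx_unique {b0 b1 b2 c0 c1 c2 : R} {P} :
  b1 ^+ 2 - b0 * b2 = 1 -> b0 * c2 + b2 * c0 = 2 * b1 * c1 ->
  (forall x y, ev2 (omega_of b0 b1 b2) x (y *m P)
               = gSU2 (dtheta R) (omega_of b0 b1 b2) (omega_of c0 c1 c2) x y) ->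
  P = Phi2_mx c0 c1 c2.
Proof.
move=> unimodular orth PhiP; apply: trmx_inj.
apply: (can_inj (omega_of_mulKmx unimodular)).
rewrite omega_of_mul_Phi2 //; apply/matrixP => i j.
by rewrite -ev2_delta -ev2_mulmxr PhiP gSU2_delta.
Qed.

Lemma preserves_V0 P : preserves P (@inV0 R) <->
  [/\ P i2 i0 = 0, P i2 i1 = 0, P i3 i0 = 0 & P i3 i1 = 0].
Proof.
split=> [PV | [P20 P21 P30 P31] y [y0 y1]].
  have V0_delta (k : 'I_4) : (2 <= k)%N -> inV0 (delta_mx 0 k : vec R).
    by case: k => [[|[|k]] ?] //= _; rewrite /inV0 !mxE.
  have [P20 P21] := PV _ (V0_delta i2 isT).
  have [P30 P31] := PV _ (V0_delta i3 isT).
  by rewrite -!rowE !mxE in P20 P21 P30 P31.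
by rewrite /inV0 !mxE !sum4 y0 y1 P20 P21 P30 P31; split; ring.
Qed.

Lemma preserves_H0 P : preserves P (@inH0 R) <->
  [/\ P i0 i2 = 0, P i0 i3 = 0, P i1 i2 = 0 & P i1 i3 = 0].
Proof.
split=> [PH | [P02 P03 P12 P13] y [y2 y3]].
  have H0_delta (k : 'I_4) : (k < 2)%N -> inH0 (delta_mx 0 k : vec R).
    by case: k => [[|[|k]] ?] //= _; rewrite /inH0 !mxE.
  have [P02 P03] := PH _ (H0_delta i0 isT).
  have [P12 P13] := PH _ (H0_delta i1 isT).
  by rewrite -!rowE !mxE in P02 P03 P12 P13.
by rewrite /inH0 !mxE !sum4 y2 y3 P02 P03 P12 P13; split; ring.
Qed.

Lemma Phi2_mx_preserves_V0 (c0 c1 c2 : R) :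
  preserves (Phi2_mx c0 c1 c2) (@inV0 R) <-> c2 = 0.
Proof.
rewrite preserves_V0 !mxE /=.
by split=> [[_ _ ->] | ->]; rewrite ?oppr0.
Qed.

Lemma Phi2_mx_preserves_H0 (c0 c1 c2 : R) :
  preserves (Phi2_mx c0 c1 c2) (@inH0 R) <-> c0 = 0.
Proof.
rewrite preserves_H0 !mxE /=.
by split=> [[_ ->] | ->]; rewrite ?oppr0.
Qed.

(* (C2) only yields the weak inequality, which is all that is needed. *)
Definition type_I_coef (b0 b1 b2 c0 c1 c2 : R) : Prop :=
  [/\ b1 ^+ 2 - b0 * b2 = 1, c1 ^+ 2 - c0 * c2 = 1,
      b0 * c2 + b2 * c0 = 2 * b1 * c1 & 0 <= b1 * c0 - b0 * c1].

Lemma type_I_coefP (b0 b1 b2 c0 c1 c2 : R) :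
  type_I b0 b1 b2 c0 c1 c2 -> type_I_coef b0 b1 b2 c0 c1 c2.
Proof.
case=> _ [_ [_ w23]] [w22 w33] orient.
rewrite vol_dtheta /wedge22 !omega_ofE !mxE /= in w22 w33 w23.
split; [lra | lra | lra |].
have contr_eq : contr (b0 *: delta_mx 0 i3 - b1 *: delta_mx 0 i1) (dtheta R)
              = contr (delta_mx 0 i0) (omega_of b0 b1 b2).
  apply/rowP => k; rewrite /contr dthetaE omega_ofE !mxE !sum4 !mxE.
  by case: k => [[|[|[|[|//]]]] ?] /=; ring.
move: (orient _ _ contr_eq).
by rewrite /ev2 omega_ofE !mxE !sum4 !mxE !sum4 !mxE /= => ?; lra.
Qed.

Lemma type_I_coef_diagonal {b0 b1 b2 c0 c1 c2 : R} :
  type_I_coef b0 b1 b2 c0 c1 c2 ->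
  (c0 = 0 /\ c2 = 0) <->
  exists b eps, [/\ b != 0, eps = 1 \/ eps = -1, 0 < eps * b,
                    omega_of b0 b1 b2 = b *: alpha2 R - b^-1 *: alpha0 R
                  & omega_of c0 c1 c2 = eps *: alpha1 R].
Proof.
case=> unimod_b unimod_c orth orient.
have omega_c eps : eps *: alpha1 R = omega_of 0 eps 0.
  by rewrite /omega_of !scale0r add0r addr0.
split=> [[c0E c2E] | [b [eps [_ _ _ _]]]]; last first.
  by rewrite omega_c => /omega_of_inj [-> _ ->].
subst c0 c2.
have c1_sq : c1 ^+ 2 = 1 by lra.
have c1_neq0 : c1 != 0.
  by apply: contra_eq_neq c1_sq => ->; rewrite expr0n eq_sym oner_neq0.
have /eqP : b1 * c1 = 0 by lra.
rewrite mulf_eq0 (negPf c1_neq0) orbF => /eqP b1E; subst b1.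
have b0b2 : b0 * b2 = -1 by lra.
have /andP[b0_neq0 b2_neq0] : (b0 != 0) && (b2 != 0).
  by rewrite -negb_or -mulf_eq0 b0b2 oppr_eq0 oner_neq0.
have b0E : b0 = - b2^-1 by apply: (mulIf b2_neq0); rewrite b0b2 mulNr mulVf.
exists b2, c1; split => //.
- by move/eqP: c1_sq; rewrite sqrf_eq1 => /orP[]/eqP; [left | right].
- have -> : c1 * b2 = (- b0 * c1) * b2 ^+ 2 by rewrite b0E; field.
  rewrite pmulr_lgt0 ?exprn_even_gt0 ?b2_neq0 ?orbT //.
  by rewrite lt0r mulf_neq0 ?oppr_eq0 //=; lra.
- by rewrite /omega_of b0E scale0r addr0 scaleNr addrC.
Qed.

End NaturalSU2.

Theorem mainTheorem14 (R : realFieldType) (b0 b1 b2 c0 c1 c2 : R)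
  (P : 'M[R]_4) :
  type_I b0 b1 b2 c0 c1 c2 ->
  (forall x y : vec R,
     ev2 (omega_of b0 b1 b2) x (y *m P)
     = gSU2 (dtheta R) (omega_of b0 b1 b2) (omega_of c0 c1 c2) x y) ->
  [/\ preserves P (@inV0 R) <-> c2 = 0,
      preserves P (@inH0 R) <-> c0 = 0
    & (preserves P (@inH0 R) /\ preserves P (@inV0 R)) <->
      (exists (b : R) (eps : R),
         [/\ b != 0, eps = 1 \/ eps = -1, 0 < eps * b,
             omega_of b0 b1 b2 = b *: alpha2 R - b^-1 *: alpha0 R
           & omega_of c0 c1 c2 = eps *: alpha1 R])].
Proof.
move=> /type_I_coefP coef PhiP.
have [unimod_b _ orth _] := coef.
rewrite (Phi2_mx_unique unimod_b orth PhiP).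
split; [exact: Phi2_mx_preserves_V0 | exact: Phi2_mx_preserves_H0 |].
apply: iff_trans (type_I_coef_diagonal coef).
by split=> -[/Phi2_mx_preserves_H0 ? /Phi2_mx_preserves_V0 ?].
Qed.
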